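(* Let $K$ be a metrizable, locally connected, compact Hausdorff space. Then for every pairwise disjoint sequence $(f_n)_{n\in\mathbb{N}}$ in $C_1(K)$, the extension $K((f_n)_{n\in\mathbb{N}})$ is a strong extension.
   Context: All spaces are Hausdorff. For a compact space $K$, $C_1(K)$ denotes the set of continuous functions $K\to[0,1]$; $f,g$ are disjoint if $f\cdot g=0$. For a real function $f$ on $K$, $supp(f)$ is the closure of $\{x\in K: f(x)\neq 0\}$. For a pairwise disjoint sequence $(f_n)_{n\in\mathbb{N}}$ in $C_1(K)$, let $D((f_n)_{n\in\mathbb{N}})$ be the union of all open sets $U\subseteq K$ such that $\{n: U\cap supp(f_n)\neq\emptyset\}$ is finite. The extension of $K$ by $(f_n)_{n\in\mathbb{N}}$, denoted $K((f_n)_{n\in\mathbb{N}})$, is the closure in $K\times[0,1]$ of the graph of the function $\sum_{n\in\mathbb{N}} f_n$ restricted to $D((f_n)_{n\in\mathbb{N}})$. The extension is called strong if it contains the graph of $\sum_{n\in\mathbb{N}} f_n$ on all of $K$. A space is locally connected if it has a basis of connected open sets. *)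

From HB Require Import structures.
From mathcomp Require Import all_boot all_order all_algebra.
From mathcomp Require Import all_classical all_reals all_analysis.
Set Implicit Arguments. Unset Strict Implicit. Unset Printing Implicit Defensive.
Import Order.TTheory GRing.Theory Num.Theory.
Import numFieldNormedType.Exports.
Local Open Scope classical_set_scope.
Local Open Scope ring_scope.

Section Ext.
Variables (R : realType) (K : topologicalType).

Definition metrizable_space : Prop :=
  exists d : K -> K -> R,
    [/\ (forall x y, 0 <= d x y),
        (forall x y, d x y = 0 <-> x = y),
        (forall x y, d x y = d y x),
        (forall x y z, d x z <= d x y + d y z) &
        (forall A : set K, open A <->
           (forall x, A x -> exists2 e : R, 0 < e & [set y | d x y < e] `<=` A))].

Definition locally_connected_space : Prop :=
  exists2 B : set (set K), basis B & (forall U, B U -> connected U).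

Definition C1 (f : K -> R) : Prop :=
  continuous f /\ (forall x, 0 <= f x <= 1).

Definition fdisjoint (f g : K -> R) : Prop := forall x, f x * g x = 0.

Definition supp (f : K -> R) : set K := closure [set x | f x != 0].

Definition Dset (fs : nat -> K -> R) : set K :=
  \bigcup_(U in [set U : set K | open U /\
      finite_set [set n : nat | U `&` supp (fs n) !=set0]]) U.

Definition fsum (fs : nat -> K -> R) (x : K) : R :=
  limn (series (fun n => fs n x)).

(* K((f_n)_n): closure in K x R (equivalently in K x [0,1], which is closed
   in K x R and contains the graph) of the graph of fsum restricted to D *)
Definition extension (fs : nat -> K -> R) : set (K * R) :=
  closure [set p : K * R | Dset fs p.1 /\ p.2 = fsum fs p.1].

Definition strong_extension (fs : nat -> K -> R) : Prop :=
  [set p : K * R | p.2 = fsum fs p.1] `<=` extension fs.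

End Ext.

(* A point x outside D((f_n)_n) has all f_n x = 0, so the graph point over x
   is (x, 0); we must approximate it by graph points over D.  Every connected
   neighbourhood V of x meets infinitely many supports, hence contains a point
   where some f_n is positive; f_n takes the value 0 at x, so by connectedness
   of f_n(V) it takes every small value t > 0 at some y in V, and such y lies
   in D with sum f_k y = t. *)

From HB Require Import structures.
From mathcomp Require Import all_boot all_order all_algebra.
From mathcomp Require Import all_classical all_reals all_analysis.
Set Implicit Arguments. Unset Strict Implicit. Unset Printing Implicit Defensive.
Import Order.TTheory GRing.Theory Num.Theory.
Import numFieldNormedType.Exports.
Local Open Scope classical_set_scope.
Local Open Scope ring_scope.

Lemma series_single (R : numDomainType) (u : nat -> R) (k n : nat) :
  (forall i, i <> k -> u i = 0) -> (k < n)%N -> series u n = u k.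
Proof.
move=> u0 kn; rewrite /series /= (bigD1_seq k) ?mem_iota ?iota_uniq ?subn0 //=.
by rewrite big1 ?addr0 // => i /eqP; exact: u0.
Qed.

Lemma lim_series_single (R : realType) (u : nat -> R) (k : nat) :
  (forall i, i <> k -> u i = 0) -> limn (series u) = u k.
Proof.
move=> u0; apply: (lim_near_cst (@Rhausdorff R)).
by exists k.+1 => // n /= kn; exact: series_single.
Qed.

Lemma connected_image_itv (R : realType) (T : topologicalType)
    (f : T -> R) (V : set T) (x y : T) (t : R) :
  connected V -> continuous f -> V x -> V y -> f x <= t <= f y ->
  exists2 z, V z & f z = t.
Proof.
move=> cV cf Vx Vy xty.
have /connected_intervalP itv :=
  connected_continuous_connected cV (continuous_subspaceT cf).
by have [z Vz <-] := itv _ _ (ex_intro2 _ _ x Vx erefl)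
  (ex_intro2 _ _ y Vy erefl) t xty; exists z.
Qed.

Section DisjointFamily.
Variables (R : realType) (K : topologicalType) (fs : nat -> K -> R).
Hypothesis fsC1 : forall n, C1 (fs n).
Hypothesis fs_disj : forall n m, n <> m -> fdisjoint (fs n) (fs m).

Lemma fs_ge0 n x : 0 <= fs n x.
Proof. by case: (fsC1 n) => _ /(_ x) /andP[]. Qed.

Lemma open_fs_gt0 n : open [set x | 0 < fs n x].
Proof.
apply: (@open_comp _ _ (fs n) [set r | 0 < r]); last exact: open_gt.
by move=> x _; exact: (fsC1 n).1.
Qed.

Lemma fs_eq0 n m x : n <> m -> fs n x != 0 -> fs m x = 0.
Proof.
move=> nm /negbTE fn0; apply/eqP.
by have /eqP := fs_disj nm x; rewrite mulf_eq0 fn0.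
Qed.

Lemma fsum_single k x : (forall i, i <> k -> fs i x = 0) -> fsum fs x = fs k x.
Proof. exact: lim_series_single. Qed.

Lemma Dset_neq0 n x : fs n x != 0 -> Dset fs x.
Proof.
move=> fnx; have fnx_gt0 : 0 < fs n x by rewrite lt0r fnx fs_ge0.
exists [set y | 0 < fs n y] => //; split; first exact: open_fs_gt0.
apply: (sub_finite_set _ (finite_set1 n)) => m [y [fny_gt0 supp_m]] /=.
apply: contrapT => mn.
have [z [fmz fnz_gt0]] :=
  supp_m _ (open_nbhs_nbhs (conj (open_fs_gt0 n) fny_gt0)).
by move: fnz_gt0 => /=; rewrite (fs_eq0 mn fmz) ltxx.
Qed.

Lemma fs_eq0_notin_Dset n x : ~ Dset fs x -> fs n x = 0.
Proof. by move=> nDx; apply: contrapT => /eqP /Dset_neq0. Qed.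

Lemma graph_in_Dset n y : fs n y != 0 -> Dset fs y /\ fsum fs y = fs n y.
Proof.
move=> fny; split; first exact: (Dset_neq0 fny).
by apply: fsum_single => i /nesym ni; exact: fs_eq0 ni fny.
Qed.

Lemma open_notin_Dset_gt0 V x : open V -> V x -> ~ Dset fs x ->
  exists n y, V y /\ 0 < fs n y.
Proof.
move=> oV Vx nDx.
have [n [z [Vz supp_n]]] : exists n, V `&` supp (fs n) !=set0.
  apply: contrapT => none; apply: nDx; exists V => //; split => //.
  rewrite (_ : [set n | _] = set0) // predeqE => n.
  by split => // meet; apply: none; exists n.
have [y [fny Vy]] := supp_n V (open_nbhs_nbhs (conj oV Vz)).
by exists n, y; split; rewrite // lt0r fny fs_ge0.
Qed.

End DisjointFamily.

Theorem theorem3p1 (R : realType) (K : topologicalType)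
  (hK : hausdorff_space K) (cK : compact [set: K])
  (mK : metrizable_space R K) (lK : locally_connected_space K)
  (fs : nat -> K -> R)
  (hC1 : forall n, C1 (fs n))
  (hdisj : forall n m, n <> m -> fdisjoint (fs n) (fs m)) :
  strong_extension fs.
Proof.
move=> [x s] /= -> W nW.
have [Dx | nDx] := pselect (Dset fs x).
  by exists (x, fsum fs x); split => //; exact: nbhs_singleton nW.
have fs_x k : fs k x = 0 := fs_eq0_notin_Dset hC1 hdisj k nDx.
have fsum_x : fsum fs x = 0 by rewrite (fsum_single (k := 0)).
rewrite fsum_x in nW.
case: nW => [[A B]] /= [nA nB] sAB.
have [e e_gt0 sB] := (nbhs_ballP _ _).1 nB.
case: lK => Bs [Bs_open Bs_basis] Bs_conn.
have [V [BsV Vx] VA] := Bs_basis x _ nA.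
have [n [y [Vy fny_gt0]]] := open_notin_Dset_gt0 hC1 (Bs_open _ BsV) Vx nDx.
pose t := Num.min (fs n y) (e / 2).
have t_gt0 : 0 < t by rewrite lt_min fny_gt0 divr_gt0.
have [z Vz fnz] : exists2 z, V z & fs n z = t.
  apply: connected_image_itv (Bs_conn _ BsV) (hC1 n).1 Vx Vy _.
  by rewrite fs_x (ltW t_gt0) ge_min lexx.
have [Dz fsum_z] : Dset fs z /\ fsum fs z = fs n z.
  by apply: (graph_in_Dset hC1 hdisj (n := n)); rewrite fnz gt_eqF.
exists (z, t); split; first by split; rewrite //= fsum_z.
apply: sAB; split; first exact: VA.
apply: sB; rewrite /ball /= sub0r normrN ger0_norm ?(ltW t_gt0) //.
by rewrite gt_min ltr_pdivrMr // ltr_pMr // ltr1n orbT.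
Qed.
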